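(* Let $\varrho$ be a normalized proximate order of order $\rho>0$ and let $f(x)=\sum_{\ell=0}^\infty x^\ell a_\ell\in A_\varrho$. Suppose $\sigma\ge0$ satisfies $$\frac{1}{\rho}\ln(\sigma)\ge\limsup_{\ell\to\infty}\Big(\frac1\ell\ln|a_\ell|+\ln(\varphi(\ell))\Big)-\frac1\rho-\frac{\ln(\rho)}{\rho},$$ where $\ln(0)=-\infty$. Then for every $\tau'>\sigma$ there exist positive constants $N$ and $C$ such that $$\sup_{\ell\ge N}\big(\ln|a_\ell|+\ell\ln(r)\big)\le\tau' r^{\varrho(r)}+C\qquad\text{for all }r>0.$$
   Context: $\mathbb{R}_n$ is the real Clifford algebra generated by $e_1,\dots,e_n$ with $e_ie_j=-e_je_i$ ($i\ne j$), $e_i^2=-1$, with Euclidean norm $|a|^2=\sum_Aa_A^2$. Paravectors $x=x_0+\sum x_\ell e_\ell$ are identified with $\mathbb{R}^{n+1}$; $\mathbb{S}=\{\sum x_\ell e_\ell:\sum x_\ell^2=1\}$. $\mathcal{SM}_L(\mathbb{R}^{n+1})$ is the set of entire left slice monogenic functions: $f(u+jv)=f_0(u,v)+jf_1(u,v)$ for all $u,v\in\mathbb{R}$, $j\in\mathbb{S}$, with $f_0,f_1$ continuously differentiable, $f_0$ even and $f_1$ odd in $v$, $\partial_uf_0=\partial_vf_1$, $\partial_vf_0=-\partial_uf_1$; each such $f$ equals its series $\sum x^\ell a_\ell$, $a_\ell\in\mathbb{R}_n$. A proximate order is a differentiable $\varrho:[0,\infty)\to[0,\infty)$ with $\lim_{r\to\infty}\varrho(r)=\rho>0$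 and $\lim_{r\to\infty}\varrho'(r)r\ln r=0$; normalized means $r\mapsto r^{\varrho(r)}$ is strictly increasing on $(0,\infty)$ and tends to $0$ as $r\to0^+$; $\varphi$ is the inverse of $r\mapsto r^{\varrho(r)}$. $A_\varrho=\bigcup_{\sigma>0}\{f\in\mathcal{SM}_L(\mathbb{R}^{n+1}):\sup_x|f(x)|e^{-\sigma|x|^{\varrho(|x|)}}<\infty\}$. Here $\ln|a_\ell|=-\infty$ if $a_\ell=0$. *)

From HB Require Import structures.
From mathcomp Require Import all_boot all_order all_algebra.
From mathcomp Require Import all_classical all_reals all_analysis.
Set Implicit Arguments. Unset Strict Implicit. Unset Printing Implicit Defensive.
Import Order.TTheory GRing.Theory Num.Theory.
Import numFieldNormedType.Exports.
Local Open Scope ring_scope.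


Section Clifford.
Variables (R : realType) (n : nat).

(** The real Clifford algebra R_n: an element is a family (a_A) indexed by the
    subsets A of {e_1,...,e_n}, i.e. a = sum_A a_A e_A. *)
Definition cliff := {ffun {set 'I_n} -> R}.

Definition czero : cliff := [ffun _ => 0].
Definition cone : cliff := [ffun A => (A == finset.set0)%:R].
Definition cadd (a b : cliff) : cliff := [ffun A => a A + b A].
Definition copp (a : cliff) : cliff := [ffun A => - a A].
Definition cscale (k : R) (a : cliff) : cliff := [ffun A => k * a A].

(** e_A e_B = (-1)^(inv(A,B) + |A cap B|) e_(A symdiff B), with e_i e_j = - e_j e_i
    (i<>j) and e_i^2 = -1. *)
Definition csign (A B : {set 'I_n}) : R :=
  (-1) ^+ (#|[set p : 'I_n * 'I_n | [&& p.1 \in A, p.2 \in B & (p.2 < p.1)%N]]|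
           + #|A :&: B|).

Definition symdiff (A B : {set 'I_n}) := (A :\: B) :|: (B :\: A).

Definition cmul (a b : cliff) : cliff :=
  [ffun C => \sum_(A : {set 'I_n}) \sum_(B : {set 'I_n} | symdiff A B == C)
               csign A B * a A * b B].

Fixpoint cpow (a : cliff) (k : nat) : cliff :=
  if k is k'.+1 then cmul (cpow a k') a else cone.

Definition cnorm (a : cliff) : R := Num.sqrt (\sum_A a A ^+ 2).

(** Paravectors x = x_0 + sum_l x_l e_l, identified with R^(n+1) (index 0 is x_0,
    index lift ord0 i is the coefficient of e_(i+1)). *)
Definition pv (x : 'rV[R]_(n.+1)) : cliff :=
  [ffun A => if A == finset.set0 then x ord0 ord0
             else if [pick i in A] is Some i then
                    (if A == [set i] then x ord0 (lift ord0 i) else 0)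
                  else 0].

Definition e0 : 'rV[R]_(n.+1) := \row_i (i == ord0)%:R.

Definition unit_sphere (j : 'rV[R]_(n.+1)) : Prop :=
  j ord0 ord0 = 0 /\ \sum_(i < n.+1 | i != ord0) j ord0 i ^+ 2 = 1.

Definition C1_2 (g : R -> R -> R) : Prop :=
  (forall u v, derivable (fun t => g t v) u 1) /\
  (forall u v, derivable (fun t => g u t) v 1) /\
  continuous (fun p : R * R => derive1 (fun t => g t p.2) p.1) /\
  continuous (fun p : R * R => derive1 (fun t => g p.1 t) p.2).

Definition slice_monogenic (f : 'rV[R]_(n.+1) -> cliff) : Prop :=
  exists f0 f1 : R -> R -> cliff,
    (forall u v j, unit_sphere j ->
       f (u *: e0 + v *: j) = cadd (f0 u v) (cmul (pv j) (f1 u v))) /\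
    (forall A, C1_2 (fun u v => f0 u v A)) /\
    (forall A, C1_2 (fun u v => f1 u v A)) /\
    (forall u v, f0 u (- v) = f0 u v) /\
    (forall u v, f1 u (- v) = copp (f1 u v)) /\
    (forall A u v, derive1 (fun t => f0 t v A) u = derive1 (fun t => f1 u t A) v) /\
    (forall A u v, derive1 (fun t => f0 u t A) v = - derive1 (fun t => f1 t v A) u).

Local Open Scope classical_set_scope.

Definition has_series (f : 'rV[R]_(n.+1) -> cliff) (a : nat -> cliff) : Prop :=
  forall x A,
    (fun N => \sum_(l < N) cmul (cpow (pv x) l) (a l) A) @ \oo --> f x A.

Definition A_class (rho : R -> R) (f : 'rV[R]_(n.+1) -> cliff) : Prop :=
  slice_monogenic f /\
  exists sigma : R, 0 < sigma /\ exists M : R, forall x,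
    cnorm (f x) * expR (- (sigma * (cnorm (pv x)) `^ (rho (cnorm (pv x))))) <= M.

Definition lnnorm (a : cliff) : \bar R :=
  if a == czero then -oo%E else (ln (cnorm a))%:E.

End Clifford.

Section ProxOrder.
Local Open Scope classical_set_scope.
Variable R : realType.

Definition proximate_order (rho : R -> R) (rho0 : R) : Prop :=
  (forall r, 0 <= r -> 0 <= rho r) /\
  (forall r, 0 < r -> derivable rho r 1) /\
  cvg ((fun h => (rho h - rho 0) / h) @ 0^'+) /\
  0 < rho0 /\
  rho r @[r --> +oo] --> rho0 /\
  (derive1 rho r * r * ln r) @[r --> +oo] --> 0.

Definition normalized (rho : R -> R) : Prop :=
  {in `]0, +oo[ &, {mono (fun r => r `^ rho r) : x y / x < y}} /\
  (fun r => r `^ rho r) @ 0^'+ --> 0.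

Definition is_phi (rho phi : R -> R) : Prop :=
  forall t, 0 < t -> 0 < phi t /\ phi t `^ rho (phi t) = t.

End ProxOrder.

From HB Require Import structures.
From mathcomp Require Import all_boot all_order all_algebra.
From mathcomp Require Import all_classical all_reals all_analysis.
From mathcomp Require Import ring lra.
Set Implicit Arguments. Unset Strict Implicit. Unset Printing Implicit Defensive.
Import Order.TTheory GRing.Theory Num.Theory.
Import numFieldNormedType.Exports.
Local Open Scope ring_scope.
Local Open Scope classical_set_scope.

(* In the coordinate u = ln r the growth function is r^rho(r) = e^(g u) with
   g u = rho(e^u) u, and the proximate-order conditions say exactly that g' tends
   to rho0, so far out every slope of g lies in any [k1, k2] around rho0.  The
   hypothesis gives ln|a_l| / l + ln phi(l) < al < (1 + ln (tau' rho0)) / rho0 for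
   large l, and k1, k2 can be chosen so that al stays below (1 + ln (tau' k)) / k.
   With v = ln phi(l), so that l = e^(g v), this yields
   ln|a_l| + l u < e^(g v) (al + u - v) <= e^(g v) tau' e^(k (u - v)) <= tau' e^(g u),
   the middle step being the tangent-line bound e^x >= 1 + x. *)

Section ExpGap.
Variable R : realType.

(* The minimum over [d] of [t * expR (k * d) - d], attained where [t * k * expR (k * d) = 1]. *)
Definition expR_gap (t k : R) : R := (1 + ln (t * k)) / k.

Lemma line_le_mul_expR (t k al d : R) : 0 < t -> 0 < k ->
  al <= expR_gap t k -> al + d <= t * expR (k * d).
Proof.
move=> t_gt0 k_gt0; rewrite ler_pdivlMr // => al_le.
have := expR_ge1Dx (k * d + ln (t * k)).
rewrite expRD lnK ?posrE ?mulr_gt0 // => tangent.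
rewrite -(ler_pM2r k_gt0) mulrAC -mulrA.
nra.
Qed.

Lemma continuous_expR_gap (t k : R) : 0 < t -> 0 < k -> {for k, continuous (expR_gap t)}.
Proof.
move=> t_gt0 k_gt0; apply: cvgM; last by apply: cvgV; [rewrite gt_eqF | exact: cvg_id].
apply: cvgD; first exact: cvg_cst.
have tk : (fun x => t * x) @ k --> t * k by exact: cvgMl_tmp cvg_id.
exact: cvg_comp tk (continuous_ln (mulr_gt0 t_gt0 k_gt0)).
Qed.

Lemma nbhs_exists_lt_gt (P : R -> Prop) (x : R) :
  (\forall k \near x, P k) -> exists k1 k2, [/\ k1 < x, x < k2, P k1 & P k2].
Proof.
move=> /nbhs_ballP [e /= e_gt0 Pball].
exists (x - e / 2), (x + e / 2); split; [lra | lra | apply: Pball | apply: Pball].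
- by rewrite /ball /= ger0_norm; lra.
- by rewrite /ball /= ler0_norm; lra.
Qed.

Lemma expR_gap_gt_around (t k al : R) : 0 < t -> 0 < k -> al < expR_gap t k ->
  exists k1 k2, [/\ 0 < k1, k1 < k < k2, al < expR_gap t k1 & al < expR_gap t k2].
Proof.
move=> t_gt0 k_gt0 al_lt.
have : \forall k' \near k, 0 < k' /\ al < expR_gap t k'.
  near=> k'; split; near: k'; first exact: cvgr_gt _ cvg_id _ k_gt0.
  exact: cvgr_gt _ (continuous_expR_gap t_gt0 k_gt0) _ al_lt.
move=> /nbhs_exists_lt_gt [k1 [k2 [k1k kk2 [k1_gt0 gap1] [_ gap2]]]].
by exists k1, k2; rewrite k1k kk2.
Unshelve. all: by end_near.
Qed.

End ExpGap.

Section LogCoordinates.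
Variable R : realType.
Implicit Types rho g : R -> R.

Definition lnpow rho (u : R) : R := rho (expR u) * u.

Definition lnpow_deriv rho (u : R) : R :=
  derive1 rho (expR u) * expR u * u + rho (expR u).

Lemma powR_lnpow rho (r : R) : 0 < r -> r `^ rho r = expR (lnpow rho (ln r)).
Proof. by move=> r_gt0; rewrite /powR gt_eqF // /lnpow lnK. Qed.

Lemma is_derive_lnpow rho (u : R) : derivable rho (expR u) 1 ->
  is_derive (u : R^o) 1 (lnpow rho) (lnpow_deriv rho u).
Proof.
move=> /derivableP rho_der.
have := is_deriveM (is_derive1_comp rho_der (is_derive_expR u)) (@is_derive_id _ R^o u 1).
move=> /is_derive_eq; apply; rewrite /lnpow_deriv derive1E /= /GRing.scale /=; ring.
Qed.

Lemma cvgy_expR : @expR R x @[x --> +oo] --> +oo.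
Proof.
apply/cvgryPge => A; near=> x.
have := expR_ge1Dx x; suff : A <= x by lra.
by near: x; apply: nbhs_pinfty_ge; rewrite num_real.
Unshelve. all: by end_near.
Qed.

Lemma lnpow_deriv_cvg rho (rho0 : R) :
  rho r @[r --> +oo] --> rho0 -> (derive1 rho r * r * ln r) @[r --> +oo] --> 0 ->
  lnpow_deriv rho u @[u --> +oo] --> rho0.
Proof.
move=> rho_cvg rho'_cvg.
have -> : lnpow_deriv rho = (fun r => derive1 rho r * r * ln r + rho r) \o expR.
  by apply/funext => u /=; rewrite expRK.
rewrite -[rho0]add0r; exact: cvg_comp cvgy_expR (cvgD rho'_cvg rho_cvg).
Qed.

Definition slopes_within g (V k1 k2 : R) : Prop :=
  forall u v, V <= v -> v <= u -> k1 * (u - v) <= g u - g v <= k2 * (u - v).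

Lemma slopes_within_derive g (dg : R -> R) (V k1 k2 : R) :
  (forall c, V <= c -> is_derive (c : R^o) 1 g (dg c)) ->
  (forall c, V <= c -> k1 <= dg c <= k2) -> slopes_within g V k1 k2.
Proof.
move=> g_der dg_bounds u v Vv vu.
have cont : {within `[v, u], continuous g}.
  apply: derivable_within_continuous => x; rewrite in_itv /= => /andP [vx _].
  by have [] := g_der x (le_trans Vv vx).
have g_der_in (x : R) : x \in `]v, u[%R -> is_derive (x : R^o) 1 g (dg x).
  by move=> /[!in_itv] /andP [/ltW vx _]; apply: g_der; apply: le_trans vx.
have [c cI ->] := MVT_segment vu g_der_in cont.
have /andP [k1c ck2] : k1 <= dg c <= k2.
  by apply: dg_bounds; move: cI; rewrite in_itv /= => /andP [vc _]; apply: le_trans vc.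
by rewrite !ler_wpM2r // subr_ge0.
Qed.

Lemma lnpow_slopes_within rho (rho0 k1 k2 : R) :
  (forall r, 0 < r -> derivable rho r 1) ->
  rho r @[r --> +oo] --> rho0 -> (derive1 rho r * r * ln r) @[r --> +oo] --> 0 ->
  k1 < rho0 -> rho0 < k2 -> exists V, slopes_within (lnpow rho) V k1 k2.
Proof.
move=> rho_der rho_cvg rho'_cvg k1_lt k2_gt.
have deriv_cvg := lnpow_deriv_cvg rho_cvg rho'_cvg.
have : \forall u \near +oo, k1 < lnpow_deriv rho u < k2.
  near=> u; apply/andP; split; near: u.
  - exact: cvgr_gt _ deriv_cvg _ k1_lt.
  - exact: cvgr_lt _ deriv_cvg _ k2_gt.
move=> [M [_ bounds]]; exists (M + 1).
apply: slopes_within_derive => [c _|c Mc].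
- exact/is_derive_lnpow/rho_der/expR_gt0.
- have /andP [k1c ck2] := bounds c ltac:(lra).
  by rewrite !ltW.
Unshelve. all: by end_near.
Qed.

Lemma slopes_within_mul_expR_le g (t k1 k2 V al u v : R) :
  0 < t -> 0 < k1 -> 0 < k2 -> al <= expR_gap t k1 -> al <= expR_gap t k2 ->
  slopes_within g V k1 k2 -> V + `|al| <= v ->
  expR (g v) * (al + u - v) <= t * expR (g u).
Proof.
move=> t_gt0 k1_gt0 k2_gt0 gap1 gap2 slopes v_ge.
have gv_gt0 := expR_gt0 (g v).
have [nonpos|pos] := lerP (al + u - v) 0.
  by apply: (@le_trans _ _ 0); [rewrite pmulr_rle0 | rewrite mulr_ge0 ?ltW ?expR_gt0].
have al_le_norm := ler_norm al; have norm_ge0 := normr_ge0 al.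
have [k [k_gt0 gap_k slope_k]] :
    exists k, [/\ 0 < k, al <= expR_gap t k & k * (u - v) <= g u - g v].
  have [vu|uv] := lerP v u.
  - exists k1; split => //.
    by have /andP [] := slopes u v ltac:(lra) vu.
  - exists k2; split => //.
    have /andP [_] := slopes v u ltac:(lra) (ltW uv); lra.
have line := line_le_mul_expR (u - v) t_gt0 k_gt0 gap_k.
have -> : expR (g u) = expR (g v) * expR (g u - g v) by rewrite -expRD addrCA subrr addr0.
rewrite mulrCA ler_pM2l // -addrA.
by apply: le_trans line _; rewrite ler_pM2l // ler_expR.
Qed.

Lemma ln_phi_cvgy (rho phi : R -> R) : normalized rho -> is_phi rho phi ->
  (ln (phi n%:R)) @[n --> \oo] --> +oo.
Proof.
move=> [rho_mono _] rho_phi; apply/cvgryPge => V.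
pose K := expR V; pose T := K `^ rho K.
have T_ge0 : 0 <= T by exact: powR_ge0.
near=> l.
have T_lt : T < l%:R by near: l; exact: nbhs_infty_gtr.
have [phi_gt0 phi_eq] := rho_phi l%:R ltac:(lra).
rewrite -[V]expRK -/K ler_ln ?posrE ?expR_gt0 // leNgt; apply/negP => phi_lt.
have := rho_mono (phi l%:R) K.
rewrite !inE /= !in_itv /= !andbT expR_gt0 phi_gt0 phi_lt phi_eq -/T => /(_ isT isT).
by rewrite ltNge (ltW T_lt).
Unshelve. all: by end_near.
Qed.

End LogCoordinates.

Section Coefficients.
Variable R : realType.
Local Open Scope ereal_scope.

Lemma limn_esup_lt_near (u : nat -> \bar R) (b : R) : limn_esup u < b%:E ->
  exists2 al : R, (al < b)%R & \forall l \near \oo, u l < al%:E.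
Proof.
rewrite /limn_esup /limf_esup => /ereal_inf_lt [_ [V [N _ VN] <-]].
have u_le l : (N <= l)%N -> u l <= ereal_sup (u @` V).
  by move=> Nl; apply: ereal_sup_ubound; exists l => //; apply: VN.
case: (ereal_sup _) u_le => [s| |] //= u_le s_lt.
- exists ((s + b) / 2)%R; first by rewrite lte_fin in s_lt; lra.
  exists N => // l /u_le /le_lt_trans; apply; rewrite lte_fin; rewrite lte_fin in s_lt; lra.
- exists (b - 1)%R; first lra.
  by exists N => // l /u_le; rewrite leeNy_eq => /eqP ->; exact: ltNyr.
Qed.

Lemma term_le_of_coef_lt (A : \bar R) (l v al U B : R) : (0 < l)%R ->
  A * l^-1%:E + v%:E < al%:E -> (l * (al + U - v) <= B)%R -> A + (l * U)%:E <= B%:E.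
Proof.
move=> l_gt0; case: A => [A | | _ _]; last by rewrite leNye.
- rewrite -EFinM -EFinD !lte_fin -EFinD lee_fin => coef_lt term_le.
  have A_lt : (A < l * (al - v))%R by rewrite mulrC -ltr_pdivrMr //; lra.
  apply: le_trans term_le.
  have -> : (l * (al + U - v) = l * (al - v) + l * U)%R by ring.
  by rewrite lerD2r ltW.
- by rewrite gt0_mulye ?lte_fin ?invr_gt0 // addye.
Qed.

Lemma lt_expR_gap (L : \bar R) (sigma tau rho0 : R) :
  (0 < rho0)%R -> (0 <= sigma)%R -> (sigma < tau)%R ->
  L - ((1 + ln rho0) / rho0)%:E <= (if sigma == 0%R then -oo else (ln sigma / rho0)%:E) ->
  L < (expR_gap tau rho0)%:E.
Proof.
move=> rho0_gt0 sigma_ge0 sigma_lt.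
have -> : expR_gap tau rho0 = (ln tau / rho0 + (1 + ln rho0) / rho0)%R.
  rewrite /expR_gap lnM ?posrE //; [ring | lra].
case: L => [L| |] //=; last by rewrite ltNyr.
- case: eqP => [_|/eqP sigma_neq0] //.
  rewrite -EFinB lee_fin lte_fin => L_le.
  have sigma_gt0 : (0 < sigma)%R by rewrite lt_neqAle eq_sym sigma_neq0.
  have : (ln sigma / rho0 < ln tau / rho0)%R.
    by rewrite ltr_pM2r ?invr_gt0 // ltr_ln ?posrE //; lra.
  lra.
- by case: eqP.
Qed.

End Coefficients.

Theorem lemma3p6 (R : realType) (n : nat) (rho : R -> R) (rho0 : R) (phi : R -> R)
  (f : 'rV[R]_(n.+1) -> cliff R n) (a : nat -> cliff R n) (sigma : R) :
  proximate_order rho rho0 -> normalized rho -> is_phi rho phi ->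
  has_series f a -> A_class rho f ->
  0 <= sigma ->
  ((if sigma == 0%R then -oo else (ln sigma / rho0)%R%:E) >=
     limn_esup (fun l : nat =>
       (lnnorm (a l) * (l%:R^-1)%R%:E + (ln (phi l%:R))%:E)%E)
     - ((1 + ln rho0) / rho0)%R%:E)%E ->
  forall tau' : R, sigma < tau' ->
    exists N : nat, (0 < N)%N /\ exists C : R, 0 < C /\
      forall r : R, 0 < r ->
        (ereal_sup [set (lnnorm (a l) + (l%:R * ln r)%R%:E)%E | l in [set l : nat | (N <= l)%N]]
           <= (tau' * r `^ rho r + C)%:E)%E.
Proof.
move=> [_ [rho_der [_ [rho0_gt0 [rho_cvg rho'_cvg]]]]] rho_norm rho_phi _ _ sigma_ge0 hyp.
move=> tau' sigma_lt; have tau'_gt0 : 0 < tau' by apply: le_lt_trans sigma_lt.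
have [al al_lt coef_lt] := limn_esup_lt_near (lt_expR_gap rho0_gt0 sigma_ge0 sigma_lt hyp).
have [k1 [k2 [k1_gt0 /andP [k1_lt k2_gt] gap1 gap2]]] :=
  expR_gap_gt_around tau'_gt0 rho0_gt0 al_lt.
have [V slopes] := lnpow_slopes_within rho_der rho_cvg rho'_cvg k1_lt k2_gt.
have : \forall l \near \oo, [/\ (0 < l)%N, (lnnorm (a l) * (l%:R^-1)%:E + (ln (phi l%:R))%:E < al%:E)%E
    & V + `|al| <= ln (phi l%:R)].
  near=> l; split; near: l; [exact: nbhs_infty_gt | exact: coef_lt |].
  by have /cvgryPge := ln_phi_cvgy rho_norm rho_phi; apply.
move=> [N _ HN]; exists N.+1; split => //; exists 1; split => // r r_gt0.
apply: ge_ereal_sup => _ [l /= /ltnW /HN [+ l_coef l_phi] <-].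
rewrite -(ltr0n R) => l_gt0; have [phi_gt0 phi_eq] := rho_phi l%:R l_gt0.
apply: le_trans (term_le_of_coef_lt (B := tau' * r `^ rho r) l_gt0 l_coef _) _.
- rewrite powR_lnpow // -{1}phi_eq powR_lnpow //.
  apply: slopes_within_mul_expR_le (ltW gap1) (ltW gap2) slopes l_phi => //.
  exact: lt_trans k2_gt.
- by rewrite lee_fin lerDl.
Unshelve. all: by end_near.
Qed.
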